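(* Let $q\ge 7$ and $s\in[1,7]$ be integers, $C$ a finite set with $|C|=2q+s$, and $M\in\mathcal M(6,q,C)$. Let $\{i,k\}\subseteq\{1,\dots,6\}$, $i\ne k$, with $r(i,k)\ge 1$, and let $B\subseteq\{1,\dots,6\}$ with $3\le|B|\le 4$ and $B\cap\{i,k\}=\emptyset$. Then $r(B)\le r^*(B)\le 2|B|$.
   Context: $\mathcal M(6,q,C)$ is the set of $6\times q$ matrices $M$ with entries from $C$ such that each row has $q$ pairwise distinct entries, each column has $6$ pairwise distinct entries, and every pair of distinct colours of $C$ appears together in some row or some column of $M$. The frequency of a colour is the number of entries of $M$ equal to it. For $A\subseteq\{1,\dots,6\}$ with $|A|\ge 2$, $\operatorname{ro}(A)$ denotes the set of colours of frequency exactly $|A|$ that appear in every row indexed by an element of $A$, and $r(A)=|\operatorname{ro}(A)|$; $r(i,k)=r(\{i,k\})$. For $B\subseteq\{1,\dots,6\}$ with $3\le|B|\le4$, $\operatorname{ro}^*(B)=\bigcup\{\operatorname{ro}(A): A\subseteq B,\ 2\le|A|\le|B|\}$ and $r^*(B)=|\operatorname{ro}^*(B)|$. *)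

From mathcomp Require Import all_boot all_order all_algebra.
Set Implicit Arguments. Unset Strict Implicit. Unset Printing Implicit Defensive.

(* Rows {1..6} are represented by 'I_6 = {0..5}, columns by 'I_q. *)
Section Defs.
Variables (C : finType) (q : nat).

Definition in_M6 (M : 'M[C]_(6, q)) : Prop :=
  [/\ (forall i : 'I_6, injective (fun j : 'I_q => M i j)),
      (forall j : 'I_q, injective (fun i : 'I_6 => M i j)) &
      (forall c d : C, c != d ->
         (exists i : 'I_6, exists j j' : 'I_q, M i j = c /\ M i j' = d) \/
         (exists j : 'I_q, exists i i' : 'I_6, M i j = c /\ M i' j = d))].

Definition freq (M : 'M[C]_(6, q)) (c : C) : nat :=
  #|[set p : 'I_6 * 'I_q | M p.1 p.2 == c]|.

Definition ro (M : 'M[C]_(6, q)) (A : {set 'I_6}) : {set C} :=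
  [set c | (freq M c == #|A|) && [forall i in A, exists j : 'I_q, M i j == c]].

Definition r (M : 'M[C]_(6, q)) (A : {set 'I_6}) : nat := #|ro M A|.

Definition ro_star (M : 'M[C]_(6, q)) (B : {set 'I_6}) : {set C} :=
  \bigcup_(A : {set 'I_6} | (A \subset B) && (2 <= #|A|)) ro M A.

Definition r_star (M : 'M[C]_(6, q)) (B : {set 'I_6}) : nat := #|ro_star M B|.
End Defs.

From mathcomp Require Import all_boot all_order all_algebra.

(* Take a colour x of ro({i,k}): it occurs only in rows i and k, at most
   twice.  A colour y of ro^*(B) occurs only in rows of B, so x and y never
   share a row; hence they share a column, and y = M a j with a in B and j
   one of the (at most two) columns holding x. *)

Set Implicit Arguments.
Unset Strict Implicit.
Unset Printing Implicit Defensive.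

Section Occurrences.
Variables (C : finType) (q : nat) (M : 'M[C]_(6, q)).

Definition cols (c : C) : {set 'I_q} := [set j | [exists a, M a j == c]].

Lemma card_cols_le_freq (c : C) : #|cols c| <= freq M c.
Proof.
rewrite /freq; set S := [set p | _].
have -> : cols c = snd @: S.
  apply/setP => j; rewrite inE; apply/existsP/imsetP => [[a Hc] | [[a j'] Hc ->]].
    by exists (a, j); rewrite ?inE.
  by exists a; rewrite inE in Hc.
exact: leq_imset_card.
Qed.

Lemma ro_sub_ro_star (B : {set 'I_6}) : 2 <= #|B| -> ro M B \subset ro_star M B.
Proof. by move=> HB; apply/subsetP => c Hc; apply/bigcupP; exists B; rewrite ?subxx. Qed.

Hypothesis row_inj : forall i : 'I_6, injective (fun j : 'I_q => M i j).

(* The rows of A already hold |A| = freq c occurrences of c, one per row. *)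
Lemma ro_row_mem (A : {set 'I_6}) c a j : c \in ro M A -> M a j = c -> a \in A.
Proof.
rewrite inE => /andP [/eqP Hfreq /forall_inP Hrows] Haj.
set S := [set p : 'I_6 * 'I_q | M p.1 p.2 == c].
have fst_inj : {in S &, injective fst}.
  move=> [a1 j1] [a2 j2]; rewrite !inE /= => /eqP h1 /eqP h2 /= e; subst a2.
  by rewrite (@row_inj a1 j1 j2) //= h1 h2.
have card_rows : #|fst @: S| = #|A| by rewrite card_in_imset // -Hfreq.
have A_sub : A \subset fst @: S.
  apply/subsetP => b Hb; have /existsP [j' Hj'] := Hrows b Hb.
  by apply/imsetP; exists (b, j'); rewrite // inE.
rewrite (subset_cardP (esym card_rows) A_sub).
by apply/imsetP; exists (a, j); rewrite // inE Haj.
Qed.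

Lemma ro_star_row_mem (B : {set 'I_6}) c a j :
  c \in ro_star M B -> M a j = c -> a \in B.
Proof.
by case/bigcupP => A /andP [/subsetP AB _] Hc Haj; apply/AB/(ro_row_mem Hc Haj).
Qed.

Lemma ro_star_occurs (B : {set 'I_6}) c :
  c \in ro_star M B -> exists a j, M a j = c.
Proof.
case/bigcupP => A /andP [_ HA]; rewrite inE => /andP [_ /forall_inP Hrows].
have [a Ha] : exists a, a \in A by apply/card_gt0P; apply: leq_trans HA.
by have /existsP [j /eqP Hj] := Hrows a Ha; exists a, j.
Qed.

Hypothesis pairs_covered : forall c d : C, c != d ->
  (exists i : 'I_6, exists j j' : 'I_q, M i j = c /\ M i j' = d) \/
  (exists j : 'I_q, exists i i' : 'I_6, M i j = c /\ M i' j = d).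

Lemma ro_star_sub_cols (A B : {set 'I_6}) x :
  [disjoint B & A] -> x \in ro M A ->
  ro_star M B \subset [set M a j | a in B, j in cols x].
Proof.
move=> BA Hx; apply/subsetP => y Hy.
have BnA a : a \in B -> a \in A -> False.
  by move=> aB aA; move: (disjointFr BA aB); rewrite aA.
have y_neq_x : y != x.
  apply/eqP => yx; subst y; have [a [j Haj]] := ro_star_occurs Hy.
  by apply: (BnA a); [apply: ro_star_row_mem Hy Haj | apply: ro_row_mem Hx Haj].
case: (pairs_covered y_neq_x) => [[a [j [j' [Hy' Hx']]]] | [j [a [a' [Hy' Hx']]]]].
  by case: (BnA a); [apply: ro_star_row_mem Hy Hy' | apply: ro_row_mem Hx Hx'].
apply/imset2P; exists a j => //; first exact: ro_star_row_mem Hy Hy'.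
by rewrite inE; apply/existsP; exists a'; rewrite Hx'.
Qed.

Lemma r_star_le_mul (A B : {set 'I_6}) :
  [disjoint B & A] -> 0 < r M A -> r_star M B <= #|B| * #|A|.
Proof.
move=> BA /card_gt0P [x Hx]; have := Hx; rewrite inE => /andP [/eqP freq_x _].
apply: leq_trans (subset_leq_card (ro_star_sub_cols BA Hx)) _.
rewrite curry_imset2X (leq_trans (leq_imset_card _ _)) // cardsX.
by rewrite leq_mul2l -freq_x card_cols_le_freq orbT.
Qed.

End Occurrences.

Theorem claim3 (C : finType) (q s : nat) (M : 'M[C]_(6, q))
  (i k : 'I_6) (B : {set 'I_6}) :
  7 <= q -> 1 <= s <= 7 -> #|C| = 2 * q + s ->
  in_M6 M ->
  i != k -> 1 <= r M [set i; k] ->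
  3 <= #|B| <= 4 -> [disjoint B & [set i; k]] ->
  r M B <= r_star M B <= 2 * #|B|.
Proof.
move=> _ _ _ [row_inj _ pairs_covered] ik Hr /andP [HB3 _] BA.
rewrite subset_leq_card ?ro_sub_ro_star ?(ltnW HB3) //=.
have card_ik : #|[set i; k]| = 2 by rewrite cards2 ik.
apply: leq_trans (r_star_le_mul row_inj pairs_covered BA Hr) _.
by rewrite card_ik mulnC.
Qed.
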